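(* Let $\mathcal{X}$ be a Banach lattice and, for each $\mathbf w\in\mathbb{R}^n_+$, let $\mathcal{A}_{\mathbf w}$ generate a positive eventually compact strongly continuous semigroup on $\mathcal{X}$, such that $\mathbf w_k\to\mathbf w$ implies $\mathcal{A}_{\mathbf w_k}\to\mathcal{A}_{\mathbf w}$ in the generalised sense. Let $S=\{\mathbf w\in\mathbb{R}^n_+ : s(\mathcal{A}_{\mathbf w})=0\}$ and for $\mathbf w\in S$ let $N_{\mathbf w}=\mathcal{S}_+\cap\ker(\mathcal{A}_{\mathbf w})$. Assume that for every $\mathbf w\in S$ the geometric multiplicity of the eigenvalue $s(\mathcal{A}_{\mathbf w})=0$ equals its algebraic multiplicity and that $\ker(\mathcal{A}_{\mathbf w})$ has a basis of non-negative vectors. Then the set-valued map $F:\mathcal{A}_{\mathbf w}\mapsto N_{\mathbf w}$ ($\mathbf w\in S$) is upper hemicontinuous in the sequential sense: whenever $\mathbf w_k,\mathbf w\in S$, $\mathbf w_k\to\mathbf w$, $u_k\in N_{\mathbf w_k}$ and $u_k\to u$ in $\mathcal{X}$, then $u\in N_{\mathbf w}$.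
   Context: $s(T)$ denotes the spectral bound $\sup\{\operatorname{Re}\lambda:\lambda\in\sigma(T)\}$. $\mathcal{S}_+=\{u\in\mathcal{X}_+:\|u\|=1\}$ is the intersection of the unit sphere with the positive cone. Generalised convergence: $T_n\to T$ if $\bar d(T_n,T)\to0$, where $\bar d(T,S)=\max\{d(G(T),G(S)),d(G(S),G(T))\}$, $G(\cdot)$ is the graph and $d(M,N)=\sup_{u\in M,\|u\|=1}\inf_{v\in N}\|u-v\|$. *)

From HB Require Import structures.
From mathcomp Require Import all_boot all_order all_algebra.
From mathcomp Require Import all_classical all_reals all_analysis.
Set Implicit Arguments. Unset Strict Implicit. Unset Printing Implicit Defensive.
Import Order.TTheory GRing.Theory Num.Theory.
Import numFieldNormedType.Exports.
Local Open Scope classical_set_scope.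
Local Open Scope ring_scope.

Section Defs.
Variables (R : realType) (X : completeNormedModType R).

Definition is_lub (le : X -> X -> Prop) (x y s : X) : Prop :=
  le x s /\ le y s /\ forall t, le x t -> le y t -> le s t.

Definition banach_lattice (le : X -> X -> Prop) : Prop :=
  [/\ (forall x, le x x),
      (forall x y, le x y -> le y x -> x = y),
      (forall x y z, le x y -> le y z -> le x z) &
      (forall x y z, le x y -> le (x + z) (y + z))] /\
  [/\
      (forall (a : R) x y, 0 <= a -> le x y -> le (a *: x) (a *: y)),
      (forall x y, exists s, is_lub le x y s) &
      (forall x y ax ay, is_lub le x (- x) ax -> is_lub le y (- y) ay ->
         le ax ay -> `|x| <= `|y|)].

Definition positive_cone (le : X -> X -> Prop) : set X := [set x | le 0 x].

Definition bounded_linear_op (L : X -> X) : Prop :=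
  (forall (a : R) x y, L (a *: x + y) = a *: L x + L y) /\ continuous L.

Definition C0_semigroup (T : R -> X -> X) : Prop :=
  [/\ (forall t, 0 <= t -> bounded_linear_op (T t)),
      (forall x, T 0 x = x),
      (forall t s x, 0 <= t -> 0 <= s -> T (t + s) x = T t (T s x)) &
      (forall x, {within [set t : R | 0 <= t], continuous (fun t => T t x)})].

Definition generates (D : set X) (A : X -> X) (T : R -> X -> X) : Prop :=
  (forall x, D x <-> cvg ((fun h : R => h^-1 *: (T h x - x)) @ 0^'+)) /\
  (forall x, D x -> (fun h : R => h^-1 *: (T h x - x)) @ 0^'+ --> A x).

Definition positive_semigroup (le : X -> X -> Prop) (T : R -> X -> X) : Prop :=
  forall t x, 0 <= t -> le 0 x -> le 0 (T t x).

Definition compact_op (L : X -> X) : Prop :=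
  compact (closure (L @` [set x | `|x| <= 1])).

Definition eventually_compact (T : R -> X -> X) : Prop :=
  exists t0 : R, 0 < t0 /\ compact_op (T t0).

(* lambda = a + i b belongs to the resolvent set iff lambda - A : D(A)_C -> X_C
   is bijective (for a closed operator, e.g. a generator, the inverse is then
   automatically bounded). *)
Definition in_resolvent (D : set X) (A : X -> X) (a b : R) : Prop :=
  (forall f g : X, exists x y : X, D x /\ D y /\
      a *: x - b *: y - A x = f /\ b *: x + a *: y - A y = g) /\
  (forall x y x' y' : X, D x -> D y -> D x' -> D y' ->
      a *: x - b *: y - A x = a *: x' - b *: y' - A x' ->
      b *: x + a *: y - A y = b *: x' + a *: y' - A y' -> x = x' /\ y = y').

Definition spectrum (D : set X) (A : X -> X) : set (R * R) :=
  [set p | ~ in_resolvent D A p.1 p.2].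

Definition spectral_bound (D : set X) (A : X -> X) : \bar R :=
  ereal_sup [set (p.1)%:E | p in spectrum D A].

Definition kernel (D : set X) (A : X -> X) : set X := [set u | D u /\ A u = 0].

Definition gen_kernel (D : set X) (A : X -> X) : set X :=
  [set u | exists k : nat,
     (forall j, (j < k)%N -> D (iter j A u)) /\ iter k A u = 0].

Definition is_basis (V : set X) (m : nat) (b : 'I_m -> X) : Prop :=
  [/\ (forall i, V (b i)),
      (forall c : 'I_m -> R, \sum_(i < m) c i *: b i = 0 -> forall i, c i = 0) &
      (forall v, V v -> exists c : 'I_m -> R, v = \sum_(i < m) c i *: b i)].

Definition has_dim (V : set X) (m : nat) : Prop :=
  exists b : 'I_m -> X, is_basis V b.

Definition geom_eq_alg_mult0 (D : set X) (A : X -> X) : Prop :=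
  forall m, has_dim (kernel D A) m <-> has_dim (gen_kernel D A) m.

Definition nonneg_basis_kernel (le : X -> X -> Prop) (D : set X) (A : X -> X)
  : Prop :=
  exists m (b : 'I_m -> X), is_basis (kernel D A) b /\ forall i, le 0 (b i).

Definition pnorm (p : X * X) : R := `|p.1| + `|p.2|.
Definition pdist (p q : X * X) : R := `|p.1 - q.1| + `|p.2 - q.2|.

Definition graph (D : set X) (A : X -> X) : set (X * X) :=
  [set (u, A u) | u in D].

Definition gap_d (M N : set (X * X)) : \bar R :=
  ereal_sup ([set 0%E] `|`
    [set ereal_inf [set (pdist u v)%:E | v in N] | u in [set u | M u /\ pnorm u = 1]]).

Definition gap_bar (D1 : set X) (A1 : X -> X) (D2 : set X) (A2 : X -> X) : \bar R :=
  Order.max (gap_d (graph D1 A1) (graph D2 A2)) (gap_d (graph D2 A2) (graph D1 A1)).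

Definition Nset (le : X -> X -> Prop) (D : set X) (A : X -> X) : set X :=
  [set u | `|u| = 1 /\ le 0 u /\ kernel D A u].

End Defs.

Definition nonneg_vec (R : realType) (n : nat) (w : 'rV[R]_n) : Prop :=
  forall i, 0 <= w ord0 i.

From Pilot Require Import Defs.
From HB Require Import structures.
From mathcomp Require Import all_boot all_order all_algebra.
From mathcomp Require Import all_classical all_reals all_analysis.
From mathcomp Require Import ring.
Set Implicit Arguments. Unset Strict Implicit. Unset Printing Implicit Defensive.
Import Order.TTheory GRing.Theory Num.Theory.
Import numFieldNormedType.Exports.
Local Open Scope classical_set_scope.
Local Open Scope ring_scope.

(* The three defining properties of elements of N_w are closed under the limits
   at hand. The positive
   cone is closed because the negative part of u is dominated, in the lattice
   order and hence in norm, by |u - u_k| for every u_k >= 0. For the kernel: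
   gap convergence lets one approximate (u_k, 0), a unit vector of the graph of
   A_{w_k}, by points (x, A_w x) of the graph of A_w, so u is a limit of x_k in
   D(A_w) with A_w x_k -> 0. Such a limit is fixed by every T_w(h), because
   ||T(h) x - x|| <= M h ||A x|| on [0, h], and a vector fixed by the
   semigroup lies in ker A_w. *)

Section PositiveCone.
Variables (R : realType) (X : completeNormedModType R) (le : X -> X -> Prop).
Hypothesis BL : banach_lattice le.

Let lat_refl x : le x x.
Proof. by case: BL => [[]]. Qed.

Let lat_trans {x y z} : le x y -> le y z -> le x z.
Proof. by case: BL => [[_ _ h _] _]; exact: h. Qed.

Let lat_add {x y} z : le x y -> le (x + z) (y + z).
Proof. by case: BL => [[_ _ _ h] _]; exact: h. Qed.

Let lat_scale {a : R} {x y} : 0 <= a -> le x y -> le (a *: x) (a *: y).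
Proof. by case: BL => [_ [h _ _]]; exact: h. Qed.

Let lat_lub x y : exists s, is_lub le x y s.
Proof. by case: BL => [_ [_ ? _]]. Qed.

Let lat_norm {x y ax ay} : is_lub le x (- x) ax -> is_lub le y (- y) ay ->
  le ax ay -> `|x| <= `|y|.
Proof. by case: BL => [_ [_ _ h]]; exact: h. Qed.

Lemma lattice_abs_ge0 x c : is_lub le x (- x) c -> le 0 c.
Proof.
move=> [xc [Nxc _]].
have cDx : le 0 (c + x) by have := lat_add x Nxc; rewrite addNr.
have c2 : le 0 (c + c).
  by apply: lat_trans cDx _; rewrite addrC; exact: lat_add c xc.
have half : (2^-1 + 2^-1 : R) = 1 by rewrite [RHS](splitr 1) mul1r.
have := lat_scale (_ : 0 <= 2^-1) c2; rewrite invr_ge0 ler0n.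
by rewrite scaler0 scalerDr -scalerDl half scale1r; apply.
Qed.

Lemma lattice_abs_id p : le 0 p -> is_lub le p (- p) p.
Proof.
move=> p0; split; [exact: lat_refl | split; last by []].
have Np0 : le (- p) 0 by have := lat_add (- p) p0; rewrite add0r subrr.
exact: lat_trans Np0 p0.
Qed.

Lemma norm_neg_part_le u v p : le 0 v -> is_lub le (- u) 0 p ->
  `|p| <= `|u - v|.
Proof.
move=> v0 [Nup [p0 p_lub]]; have [c habs] := lat_lub (u - v) (- (u - v)).
apply: (lat_norm (lattice_abs_id p0) habs).
apply: p_lub; last exact: lattice_abs_ge0 habs.
apply: lat_trans habs.2.1.
by have := lat_add (- u) v0; rewrite add0r opprB addrC.
Qed.

Lemma positive_cone_closed (uk : nat -> X) u :
  (forall k, le 0 (uk k)) -> uk @ \oo --> u -> le 0 u.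
Proof.
move=> uk0 cvu; have [p p_lub] := lat_lub (- u) 0.
suff p_eq0 : p = 0 by have := lat_add u p_lub.1; rewrite p_eq0 addNr add0r.
apply/eqP; rewrite -normr_le0; apply/ler_addgt0Pr => e e0; rewrite add0r.
move: cvu => /cvgrPdist_lt /(_ e e0) /filter_ex [k /ltW uke].
exact: le_trans (norm_neg_part_le (uk0 k) p_lub) uke.
Qed.

End PositiveCone.

Section BoundedLinearOp.
Variables (R : realType) (X : completeNormedModType R) (L : X -> X).
Hypothesis hL : bounded_linear_op L.

Let Ll : {linear X -> X} := HB.pack L (GRing.isLinear.Build _ _ _ _ _ hL.1).

Lemma bounded_linear_op0 : L 0 = 0.
Proof. exact: (linear0 Ll). Qed.

Lemma bounded_linear_opZ a x : L (a *: x) = a *: L x.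
Proof. exact: (linearZZ Ll). Qed.

Lemma bounded_linear_opB x y : L (x - y) = L x - L y.
Proof. exact: (linearB Ll). Qed.

Lemma bounded_linear_op_bounded : bounded_fun_norm L.
Proof. exact: (bounded_funP Ll).2 ((linear_bounded_continuous Ll).2 hL.2). Qed.

End BoundedLinearOp.

Section C0Semigroup.
Variables (R : realType) (X : completeNormedModType R).
Variables (T : R -> X -> X) (D : set X) (A : X -> X).
Hypotheses (hT : C0_semigroup T) (hgen : generates D A T).

Let T_lin {t} : 0 <= t -> bounded_linear_op (T t).
Proof. by case: hT => + _ _ _; apply. Qed.

(* Banach-Steinhaus, applied to the orbits t |-> T t x, continuous on [0, h]. *)
Lemma C0_semigroup_bounded_on h : 0 <= h ->
  exists2 M, 0 < M & forall s x, 0 <= s <= h -> `|T s x| <= M * `|x|.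
Proof.
have [_ _ _ Tc] := hT; move=> h0.
pose F := [set f | exists s, 0 <= s <= h /\ f = T s].
have : uniform_bounded F.
  apply: Banach_Steinhauss.
    move=> f [s [/andP[s0 _] ->]].
    by split; [exact: bounded_linear_op_bounded (T_lin s0) | exact: (T_lin s0).1].
  move=> x.
  have cx : {within `[0, h], continuous (fun t => T t x)}.
    by apply: continuous_subspaceW (Tc x) => t /=; rewrite in_itv => /andP[].
  have [M [_ hM]] := compact_bounded (continuous_compact cx (@segment_compact _ 0 h)).
  exists (M + 1) => f [s [sh ->]].
  by apply: (hM (M + 1)); [rewrite ltrDl | exists s => //; rewrite in_itv].
move=> /(_ 1) [M hM]; exists (Num.max M 1); first by rewrite lt_max ltr01 orbT.
move=> s x sh; have s0 : 0 <= s by case/andP: sh.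
have [->|x0] := eqVneq x 0.
  by rewrite (bounded_linear_op0 (T_lin s0)) normr0 mulr0.
have nx : 0 < `|x| by rewrite normr_gt0.
have ex : x = `|x| *: (`|x|^-1 *: x) by rewrite scalerA divff ?scale1r // gt_eqF.
rewrite {1}ex (bounded_linear_opZ (T_lin s0)) normrZ normr_id mulrC ler_pM2r //.
rewrite le_max (hM _ (ex_intro _ s (conj sh erefl))) //.
by rewrite normrZ normfV normr_id mulVf // gt_eqF.
Qed.

Lemma C0_semigroup_telescope v t m : 0 <= t ->
  T (m%:R * t) v - v = \sum_(j < m) T (j%:R * t) (T t v - v).
Proof.
have [_ T0 Tsg _] := hT; move=> t0.
elim: m => [|m IH]; first by rewrite big_ord0 mul0r T0 subrr.
have mt0 : 0 <= m%:R * t by rewrite mulr_ge0.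
rewrite big_ord_recr /= -IH (bounded_linear_opB (T_lin mt0)) -Tsg //.
by rewrite -[m.+1]addn1 natrD mulrDl mul1r [RHS]addrC addrA subrK.
Qed.

Section IncrementBound.
Variables (h M : R).
Hypotheses (h0 : 0 < h) (M0 : 0 < M).
Hypothesis T_bounded : forall s x, 0 <= s <= h -> `|T s x| <= M * `|x|.

Lemma C0_semigroup_increment_le_quotient v (N : nat) :
  `|T h v - v| <= M * h * `|(h / N.+1%:R)^-1 *: (T (h / N.+1%:R) v - v)|.
Proof.
set t := h / N.+1%:R; have t0 : 0 < t by rewrite divr_gt0.
have ht : h = N.+1%:R * t by rewrite /t mulrC divfK // pnatr_eq0.
rewrite {1}ht (C0_semigroup_telescope _ _ (ltW t0)).
apply: le_trans (ler_norm_sum _ _ _) _.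
apply: le_trans (ler_sum _ (fun (j : 'I_N.+1) _ => T_bounded (T t v - v) _)) _.
  move=> j _; rewrite mulr_ge0 ?ler0n ?(ltW t0) //= ht ler_pM2r // ler_nat.
  exact: ltnW.
rewrite sumr_const card_ord normrZ ger0_norm ?invr_ge0 ?(ltW t0) // ht.
by rewrite -mulr_natr le_eqVlt; apply/orP; left; apply/eqP; field; rewrite gt_eqF.
Qed.

Lemma C0_semigroup_increment_bound v : D v -> `|T h v - v| <= M * h * `|A v|.
Proof.
move=> Dv; apply/ler_addgt0Pr => e e0.
have e'0 : 0 < e / (M * h) by rewrite divr_gt0 // mulr_gt0.
have step_cvg : (fun N : nat => h / N.+1%:R) @ \oo --> (0 : R).
  by have := @cvgMl_tmp R nat \oo _ _ h 0 (@cvg_harmonic R); rewrite mulr0; apply.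
move: (hgen.2 v Dv) => /cvgrPdist_lt /(_ _ e'0); rewrite near_withinE => Aq.
have : \forall N \near \oo, 0 < h / N.+1%:R ->
    `|A v - (h / N.+1%:R)^-1 *: (T (h / N.+1%:R) v - v)| < e / (M * h).
  exact: step_cvg Aq.
move=> /filter_ex [N /(_ (divr_gt0 h0 (ltr0Sn _ N)))].
have := C0_semigroup_increment_le_quotient v N.
set t := h / N.+1%:R; set q := t^-1 *: _ => incr_le Avq.
have q_le : `|q| <= `|A v| + e / (M * h).
  rewrite -(subrK (A v) q); apply: le_trans (ler_normD _ _) _.
  by rewrite addrC lerD2l distrC ltW.
apply: le_trans incr_le (le_trans (ler_wpM2l _ q_le) _).
  by rewrite mulr_ge0 ?ltW.
by rewrite mulrDr le_eqVlt; apply/orP; left; apply/eqP; field; rewrite !gt_eqF.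
Qed.

End IncrementBound.

Lemma C0_semigroup_fixed_of_graph_approx u :
  (forall e, 0 < e -> exists2 x, D x & `|u - x| + `|A x| < e) ->
  forall h, 0 < h -> T h u = u.
Proof.
move=> approx h h0; have [M M0 T_bounded] := C0_semigroup_bounded_on (ltW h0).
apply/eqP; rewrite -subr_eq0 -normr_le0; apply/ler_addgt0Pr => e e0.
rewrite add0r; pose C := M + M * h + 1.
have C0 : 0 < C by rewrite !addr_gt0 ?mulr_gt0.
have [x Dx /ltW ux_Ax] := approx (e / C) (divr_gt0 e0 C0).
have ux : `|u - x| <= e / C by apply: le_trans ux_Ax; rewrite lerDl.
have Ax : `|A x| <= e / C by apply: le_trans ux_Ax; rewrite lerDr.
have -> : T h u - u = T h (u - x) + (T h x - x) + (x - u).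
  by rewrite (bounded_linear_opB (T_lin (ltW h0))) !addrA !subrK.
have Tux : `|T h (u - x)| <= M * (e / C).
  by apply: le_trans (T_bounded _ _ _) _; rewrite ?ler_pM2l // lexx ltW.
have Tx : `|T h x - x| <= M * h * (e / C).
  apply: le_trans (C0_semigroup_increment_bound h0 M0 T_bounded Dx) _.
  by rewrite ler_pM2l ?mulr_gt0.
apply: le_trans (ler_normD _ _) _; rewrite distrC.
apply: le_trans (lerD (ler_normD _ _) ux) _.
apply: le_trans (lerD (lerD Tux Tx) (lexx _)) _.
by rewrite le_eqVlt; apply/orP; left; apply/eqP; rewrite /C; field; rewrite gt_eqF.
Qed.

Lemma generator_kernel_of_fixed u :
  (forall h, 0 < h -> T h u = u) -> Defs.kernel D A u.
Proof.
move=> fixed; have q_cvg0 : (fun t => t^-1 *: (T t u - u)) @ 0^'+ --> 0.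
  apply/cvgrPdist_lt => e e0; rewrite near_withinE; apply: nearW => t t0.
  by rewrite fixed // subrr scaler0 subrr normr0.
have Du : D u by apply/(hgen.1 u); exact: cvgP q_cvg0.
by split=> //; exact: cvg_unique (hgen.2 u Du) q_cvg0.
Qed.

Lemma generator_kernel_of_graph_approx u :
  (forall e, 0 < e -> exists2 x, D x & `|u - x| + `|A x| < e) ->
  Defs.kernel D A u.
Proof.
move=> approx; apply: generator_kernel_of_fixed.
exact: C0_semigroup_fixed_of_graph_approx.
Qed.

End C0Semigroup.

Lemma gap_d_lt (R : realType) (X : completeNormedModType R)
    (M N : set (X * X)) p e :
  M p -> pnorm p = 1 -> (gap_d M N < e%:E)%E -> exists2 q, N q & pdist p q < e.
Proof.
move=> Mp p1 gap_lt.
have : (ereal_inf [set (pdist p q)%:E | q in N] < e%:E)%E.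
  by apply: le_lt_trans gap_lt; apply: ereal_sup_ubound; right; exists p.
by case/ereal_inf_lt => _ [q Nq <-]; rewrite lte_fin; exists q.
Qed.

Theorem lemma2p7 (R : realType) (X : completeNormedModType R)
  (le : X -> X -> Prop) (n : nat)
  (D : 'rV[R]_n -> set X) (A : 'rV[R]_n -> X -> X)
  (T : 'rV[R]_n -> R -> X -> X) :
  banach_lattice le ->
  (forall w, nonneg_vec w ->
     [/\ C0_semigroup (T w), generates (D w) (A w) (T w),
         positive_semigroup le (T w) & eventually_compact (T w)]) ->
  (forall (wk : nat -> 'rV[R]_n) (w : 'rV[R]_n),
     (forall k, nonneg_vec (wk k)) -> nonneg_vec w -> wk @ \oo --> w ->
     (fun k => gap_bar (D (wk k)) (A (wk k)) (D w) (A w)) @ \oo --> 0%E) ->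
  (forall w, nonneg_vec w -> spectral_bound (D w) (A w) = 0%E ->
     geom_eq_alg_mult0 (D w) (A w) /\ nonneg_basis_kernel le (D w) (A w)) ->
  forall (wk : nat -> 'rV[R]_n) (w : 'rV[R]_n) (uk : nat -> X) (u : X),
    (forall k, nonneg_vec (wk k) /\ spectral_bound (D (wk k)) (A (wk k)) = 0%E) ->
    nonneg_vec w -> spectral_bound (D w) (A w) = 0%E ->
    wk @ \oo --> w ->
    (forall k, Nset le (D (wk k)) (A (wk k)) (uk k)) ->
    uk @ \oo --> u ->
    Nset le (D w) (A w) u.
Proof.
move=> BL HT Hgap _ wk w uk u Hwk Hw _ cvw HN cvu.
have [hT hgen _ _] := HT w Hw.
have gap_cvg := Hgap wk w (fun k => (Hwk k).1) Hw cvw.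
split; [|split].
- have := cvg_norm cvu; rewrite (funext (fun k => (HN k).1)).
  by move=> norm_cvg; exact: cvg_unique _ (norm_cvg _) (cvg_cst _).
- have := positive_cone_closed BL (fun k => (HN k).2.1); apply; exact: cvu.
apply: (generator_kernel_of_graph_approx hT hgen) => e e0.
have e2 : 0 < e / 2 by rewrite divr_gt0.
have e2E : (0 < (e / 2)%:E)%E by rewrite lte_fin.
have gap_near : \forall k \near \oo,
    (gap_bar (D (wk k)) (A (wk k)) (D w) (A w) < (e / 2)%:E)%E :=
  gap_cvg _ (open_ereal_lt' e2E).
move: cvu => /cvgrPdist_lt /(_ _ e2) u_near.
have [k [gap_k uk_u]] := filter_ex (filterI gap_near u_near).
have [_ [x Dx <-]] : exists2 q, graph (D w) (A w) q & pdist (uk k, 0) q < e / 2.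
  apply: (gap_d_lt (M := graph (D (wk k)) (A (wk k)))) (le_lt_trans _ gap_k).
  - by exists (uk k); [exact: (HN k).2.2.1 | rewrite (HN k).2.2.2].
  - by rewrite /pnorm /= (HN k).1 normr0 addr0.
  - by rewrite le_max lexx.
rewrite /pdist /= sub0r normrN => ukx_Ax; exists x => //.
apply: le_lt_trans (lerD (ler_distD (uk k) u x) (lexx _)) _.
by rewrite -addrA [e]splitr ltrD.
Qed.
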